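(* Suppose there exists a (possibly randomized) one-way communication protocol in which each message has at most $c$ bits and which solves $\mathrm{OvME}_{n,k,t}$ with probability at least $\frac12+\varepsilon$ for some $\varepsilon>0$. Then there exists a deterministic one-way protocol for $\mathrm{HLP}_{n,t}$ in which Alice sends at most $c$ bits and Bob answers correctly with probability at least $\frac12+\varepsilon/k$.
   Context: One-vs-Many-Expanders $\mathrm{OvME}_{n,k,t}$: $n$ vertices $V$, a uniformly random labeling $\Sigma$ partitioning $V$ into $t$ equal-size classes $\Sigma_1,\dots,\Sigma_t$, unknown to the players ($4t$ divides $n$). Players $P_1,\dots,P_k$; $P_i$ receives a matching $M_i$ of size $n/4$. With probability $1/2$ each: Yes-case, each $M_i$ independently uniform over all matchings of size $n/4$ on $V$; No-case, each $M_i$ independently uniform over matchings of size $n/4$ with exactly $n/(4t)$ edges inside each class $\Sigma_j$. Player $P_1$ sends a message to $P_2$, $P_2$ (knowing $M_2$ and the received message) to $P_3$, and so on; $P_k$ outputs Yes or No. Hidden Labeling Problem $\mathrm{HLP}_{n,t}$: Alice gets a uniformly random labeling $\Sigma$ of $V$ into $t$ equal-size classes, Bob gets a matching $M$ of size $n/4$; with probability $1/2$ each, Yes-case: $M$ uniform over all matchings of size $n/4$ on $V$; No-case: $M$ uniform over matchings of size $n/4$ with exactly $n/(4t)$ edges inside each class. Alice sends one message to Bob, who outputs Yes or No. Success probability is over the input distribution and protocol randomness. *)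

From mathcomp Require Import all_boot all_order all_algebra.
Set Implicit Arguments. Unset Strict Implicit. Unset Printing Implicit Defensive.
Import Order.TTheory GRing.Theory Num.Theory.
Local Open Scope ring_scope.

Definition Matching (n : nat) := {set {set 'I_n}}.

Definition is_matching n (M : Matching n) : bool :=
  [forall e in M, #|e| == 2%N] &&
  [forall e in M, forall e' in M, (e != e') ==> [disjoint e & e']].

Definition matchings n : {set Matching n} :=
  [set M : Matching n | is_matching M && (#|M| == n %/ 4)%N].

Definition Labeling n t := {ffun 'I_n -> 'I_t}.

Definition labelings n t : {set Labeling n t} :=
  [set S : Labeling n t | [forall j : 'I_t, #|[set v | S v == j]| == n %/ t]%N].

Definition lclass n t (S : Labeling n t) (j : 'I_t) : {set 'I_n} :=
  [set v | S v == j].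

Definition no_matchings n t (S : Labeling n t) : {set Matching n} :=
  [set M in matchings n |
     [forall j : 'I_t, #|[set e in M | e \subset lclass S j]| == n %/ (4 * t)]%N].

Definition avg (R : numFieldType) (T : finType) (A : {set T}) (F : T -> R) : R :=
  (#|A|%:R)^-1 * \sum_(x in A) F x.

Definition msg (c : nat) := c.-tuple bool.
Definition msg0 (c : nat) : msg c := nseq_tuple c false.

(* Inputs of players P_1..P_k, indexed 0..k-1. *)
Definition yes_inputs n k : {set {ffun 'I_k -> Matching n}} :=
  [set Ms : {ffun 'I_k -> Matching n} | [forall i, Ms i \in matchings n]].
Definition no_inputs n t k (S : Labeling n t) : {set {ffun 'I_k -> Matching n}} :=
  [set Ms : {ffun 'I_k -> Matching n} | [forall i, Ms i \in no_matchings S]].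

(* A deterministic one-way k-player protocol with c-bit messages:
   player i (0-indexed, i < k-1) sends  step i m M_i  where m is the message
   received from player i-1 (msg0 for the first player, which receives nothing);
   the last player (index k-1) outputs  out m M_{k-1}  (true = Yes). *)
Definition input_at n k (Ms : {ffun 'I_k -> Matching n}) (i : nat) : Matching n :=
  odflt set0 (omap Ms (insub i)).

Fixpoint ovme_msg n c k (step : nat -> msg c -> Matching n -> msg c)
    (Ms : {ffun 'I_k -> Matching n}) (i : nat) : msg c :=
  match i with
  | 0 => msg0 c
  | i'.+1 => step i' (ovme_msg step Ms i') (input_at Ms i')
  end.

Definition ovme_run n c k (step : nat -> msg c -> Matching n -> msg c)
    (out : msg c -> Matching n -> bool) (Ms : {ffun 'I_k -> Matching n}) : bool :=
  out (ovme_msg step Ms k.-1) (input_at Ms k.-1).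

(* Success probability of a randomized (public-coin, random seed r drawn from
   the distribution mu on the finite type Rnd) protocol on OvME_{n,k,t}. *)
Definition ovme_success (R : numFieldType) n k t c (Rnd : finType) (mu : Rnd -> R)
    (step : Rnd -> nat -> msg c -> Matching n -> msg c)
    (out : Rnd -> msg c -> Matching n -> bool) : R :=
  2^-1 * avg (labelings n t) (fun S : Labeling n t =>
           avg (yes_inputs n k) (fun Ms =>
             \sum_r mu r * (ovme_run (step r) (out r) Ms == true)%:R))
  + 2^-1 * avg (labelings n t) (fun S : Labeling n t =>
           avg (no_inputs k S) (fun Ms =>
             \sum_r mu r * (ovme_run (step r) (out r) Ms == false)%:R)).

Definition hlp_success (R : numFieldType) n t c
    (alice : Labeling n t -> msg c) (bob : msg c -> Matching n -> bool) : R :=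
  2^-1 * avg (labelings n t) (fun S : Labeling n t =>
           avg (matchings n) (fun M => (bob (alice S) M == true)%:R))
  + 2^-1 * avg (labelings n t) (fun S : Labeling n t =>
           avg (no_matchings S) (fun M => (bob (alice S) M == false)%:R)).

From mathcomp Require Import all_boot all_order all_algebra.
From mathcomp Require Import zify ring lra.

(* A hybrid argument.  In the j-th hybrid the first j players get No-case matchings and the
   others Yes-case ones, so hybrids 0 and k are the two cases of OvME.  Distinguishing
   hybrid j from hybrid j+1 with the protocol is an HLP instance, and these k advantages
   telescope to the advantage on OvME, so for some j and some random seed it is at least
   eps/k.  Fixing also the matchings b of the players after j, Alice, who knows the
   labeling, picks the best matchings for the players before j and sends the message they
   would produce; Bob puts his matching at position j and simulates the remaining players. *)
Set Implicit Arguments. Unset Strict Implicit. Unset Printing Implicit Defensive.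
Import Order.TTheory GRing.Theory Num.Theory.
Local Open Scope ring_scope.

Section Average.
Variable R : numFieldType.
Implicit Types (T : finType).

Lemma avgD T (A : {set T}) (f g : T -> R) :
  avg A (fun x => f x + g x) = avg A f + avg A g.
Proof. by rewrite /avg big_split mulrDr. Qed.

Lemma avgZ T (A : {set T}) (a : R) (f : T -> R) :
  avg A (fun x => a * f x) = a * avg A f.
Proof. by rewrite /avg -mulr_sumr mulrCA. Qed.

Lemma avg_sum T (I : finType) (A : {set T}) (f : I -> T -> R) :
  avg A (fun x => \sum_i f i x) = \sum_i avg A (f i).
Proof. by rewrite /avg exchange_big mulr_sumr. Qed.

Lemma exchange_avg T T' (A : {set T}) (B : {set T'}) (F : T -> T' -> R) :
  avg A (fun a => avg B (F a)) = avg B (fun b => avg A (F^~ b)).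
Proof.
rewrite /avg !mulr_sumr; under eq_bigr do rewrite !mulr_sumr.
under [RHS]eq_bigr do rewrite !mulr_sumr.
by rewrite exchange_big; apply: eq_bigr => b _; apply: eq_bigr => a _; rewrite mulrCA.
Qed.

Lemma eq_avg T (A : {set T}) (f g : T -> R) :
  {in A, f =1 g} -> avg A f = avg A g.
Proof. by move=> fg; rewrite /avg (eq_bigr g). Qed.

Lemma ler_avg T (A : {set T}) (f g : T -> R) :
  {in A, forall x, f x <= g x} -> avg A f <= avg A g.
Proof. by move=> fg; rewrite /avg ler_wpM2l ?invr_ge0 ?ler0n ?ler_sum. Qed.

Lemma avg_ge0 T (A : {set T}) (f : T -> R) :
  (forall x, 0 <= f x) -> 0 <= avg A f.
Proof. by move=> f0; rewrite /avg mulr_ge0 ?invr_ge0 ?ler0n ?sumr_ge0. Qed.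

Lemma avg_cst T (A : {set T}) (a : R) : A != set0 -> avg A (fun=> a) = a.
Proof.
move=> /set0Pn[x xA]; rewrite /avg sumr_const -[a *+ _]mulr_natl mulKf //.
by rewrite pnatr_eq0 -lt0n; apply/card_gt0P; exists x.
Qed.

End Average.

Section AverageArgmax.
Variable R : realFieldType.

Lemma avg_ge_exists (T : finType) (A : {set T}) (f : T -> R) (a : R) :
  0 < a -> a <= avg A f -> exists x, a <= f x.
Proof.
move=> a0 le_a_avg; apply/existsP; apply: contraTT le_a_avg.
rewrite negb_exists => /forallP f_lt; rewrite -ltNge.
have [->|[x xA]] := set_0Vmem A; first by rewrite /avg cards0 invr0 mul0r.
rewrite -(@avg_cst _ _ A a); last by apply/set0Pn; exists x.
rewrite /avg ltr_pM2l ?invr_gt0 ?ltr0n; last by apply/card_gt0P; exists x.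
apply: ltr_sum => [|y _]; last by rewrite ltNge f_lt.
by apply/hasP; exists x => //; rewrite mem_index_enum.
Qed.

Lemma avg_le_pick (T : finType) (A : {set T}) (f : T -> R) (x0 : T) :
  (forall x, 0 <= f x) -> avg A f <= f (odflt x0 [pick x | avg A f <= f x]).
Proof.
move=> f0; case: pickP => [x //|f_lt] /=.
have [avg0|avg_gt0] := leP (avg A f) 0; first exact: le_trans avg0 (f0 x0).
by have [x le_x] := avg_ge_exists avg_gt0 (lexx _); move: (f_lt x); rewrite le_x.
Qed.

Lemma convex_ge_exists (I : finType) (w f : I -> R) (a : R) :
  (forall i, 0 <= w i) -> \sum_i w i = 1 -> a <= \sum_i w i * f i ->
  exists i, a <= f i.
Proof.
move=> w0 w1 le_a_sum; apply/existsP; apply: contraTT le_a_sum.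
rewrite negb_exists => /forallP f_lt; rewrite -ltNge -subr_gt0.
have [i wi] : exists i, 0 < w i.
  apply/existsP; apply: contraT; rewrite negb_exists => /forallP w_le0.
  move/eqP: w1; rewrite big1 ?(eq_sym 0) ?oner_eq0 // => i _.
  by apply/eqP; rewrite eq_le w0 andbT leNgt w_le0.
rewrite -[a]mul1r -w1 mulr_suml -sumrB (bigD1 i) //= -mulrBr ltr_wpDr //.
  by apply: sumr_ge0 => j _; rewrite -mulrBr mulr_ge0 // subr_ge0 ltW // ltNge f_lt.
by rewrite mulr_gt0 // subr_gt0 ltNge f_lt.
Qed.

End AverageArgmax.

Section Splice.
Variables (T : finType) (k : nat) (x0 : T).
Implicit Types (x b Ms : {ffun 'I_k -> T}) (j : 'I_k).

Definition prodset (D : 'I_k -> {set T}) : {set {ffun 'I_k -> T}} :=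
  [set Ms : {ffun 'I_k -> T} | [forall i, Ms i \in D i]].

Lemma eq_prodset (D D' : 'I_k -> {set T}) : D =1 D' -> prodset D = prodset D'.
Proof. by move=> DD'; apply/setP => Ms; rewrite !inE; apply: eq_forallb => i; rewrite DD'. Qed.

Definition zones j (L M U : {set T}) (i : 'I_k) : {set T} :=
  if (i < j)%N then L else if (j < i)%N then U else M.

Definition splice j x (m : T) b : {ffun 'I_k -> T} :=
  [ffun i : 'I_k => if (i < j)%N then x i else if (j < i)%N then b i else m].

Lemma splice_at j x m b : splice j x m b j = m.
Proof. by rewrite ffunE ltnn. Qed.

Let cst0 : {ffun 'I_k -> T} := [ffun=> x0].

(* The inverse of [splice j] cuts [Ms] into its prefix, [Ms j] and its suffix, padding the
   other coordinates with [x0]; this is the bijectivity condition of [reindex_onto]. *)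
Lemma splice_prodset j (L M U : {set T}) x m b :
  (splice j x m b \in prodset (zones j L M U)) &&
    ((splice j (splice j x m b) x0 cst0, (splice j x m b j, splice j cst0 x0 (splice j x m b)))
      == (x, (m, b)))
  = [&& x \in prodset (zones j L [set x0] [set x0]), m \in M
      & b \in prodset (zones j [set x0] [set x0] U)].
Proof.
rewrite !inE splice_at; apply/idP/idP.
- case/andP => /forallP in_zones /eqP[<- <-]; apply/and3P; split.
  + apply/forallP => i; have := in_zones i; rewrite /zones !ffunE.
    by case: ltngtP => // _; rewrite inE.
  + by have := in_zones j; rewrite /zones ltnn splice_at.
  + apply/forallP => i; have := in_zones i; rewrite /zones !ffunE.
    by case: ltngtP => // _; rewrite inE.
- case/and3P => /forallP x_in m_in /forallP b_in; apply/andP; split.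
  + apply/forallP => i; have := x_in i; have := b_in i; rewrite /zones ffunE.
    by case: ltngtP => // /val_inj->.
  + rewrite !xpair_eqE eqxx /=; apply/andP; split; apply/eqP/ffunP => i.
    * by have := x_in i; rewrite /zones !ffunE; case: ltngtP => // [_|/val_inj->] /set1P.
    * by have := b_in i; rewrite /zones !ffunE; case: ltngtP => // [_|/val_inj->] /set1P.
Qed.

Variable R : numFieldType.
Variables (j : 'I_k) (L M U : {set T}).
Let Pre := prodset (zones j L [set x0] [set x0]).
Let Suf := prodset (zones j [set x0] [set x0] U).

Lemma sum_splice (F : {ffun 'I_k -> T} -> R) :
  \sum_(Ms in prodset (zones j L M U)) F Ms =
  \sum_(x in Pre) \sum_(m in M) \sum_(b in Suf) F (splice j x m b).
Proof.
under [RHS]eq_bigr do rewrite pair_big.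
rewrite pair_big /= (reindex_onto (fun p => splice j p.1 p.2.1 p.2.2)
  (fun Ms => (splice j Ms x0 cst0, (Ms j, splice j cst0 x0 Ms)))) /=.
  by apply: eq_bigl => -[x [m b]]; exact: splice_prodset.
by move=> Ms _; apply/ffunP => i; rewrite !ffunE; case: ltngtP => // /val_inj->.
Qed.

Lemma avg_splice (F : {ffun 'I_k -> T} -> R) :
  avg (prodset (zones j L M U)) F =
  avg Pre (fun x => avg M (fun m => avg Suf (fun b => F (splice j x m b)))).
Proof.
have card_zones : #|prodset (zones j L M U)|%:R = #|Pre|%:R * #|M|%:R * #|Suf|%:R :> R.
  have := sum_splice (fun _ => 1); rewrite !sumr_const => ->.
  by rewrite -!mulrnA -!natrM mulnC [(#|M| * _)%N]mulnC.
rewrite /avg card_zones sum_splice !invfM -!mulrA; congr (_ * _).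
rewrite !mulr_sumr; apply: eq_bigr => x _; congr (_ * _).
by rewrite mulr_sumr.
Qed.

End Splice.

Lemma card_bigcup_uniq (T I : finType) (P : I -> {set T}) :
  (forall x i i', x \in P i -> x \in P i' -> i = i') -> #|\bigcup_i P i| = \sum_i #|P i|.
Proof.
move=> P_uniq; rewrite -sum1_card; under [RHS]eq_bigr do rewrite -sum1_card.
rewrite [RHS](exchange_big_dep (mem (\bigcup_i P i))) /= => [|i x _ Px]; last first.
  by apply/bigcupP; exists i.
apply: eq_bigr => x /bigcupP[i _ Px]; rewrite (eq_bigl (pred1 i)) ?big_pred1_eq // => i'.
by apply/idP/eqP => [Px'|->] //; exact: P_uniq Px' Px.
Qed.

Section Matchings.
Variable n : nat.
Implicit Types (M P : Matching n) (C e : {set 'I_n}).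

Lemma is_matchingP M :
  reflect ({in M, forall e, #|e| = 2} /\ {in M &, forall e e', e != e' -> [disjoint e & e']})
          (is_matching M).
Proof.
apply: (iffP andP) => -[card2 disj]; split.
- by move=> e Me; move/forall_inP/(_ e Me)/eqP: card2.
- by move=> e e' Me Me'; move/forall_inP/(_ e Me)/forall_inP/(_ e' Me')/implyP: disj.
- by apply/forall_inP => e /card2->.
- by apply/forall_inP => e Me; apply/forall_inP => e' Me'; apply/implyP; apply: disj.
Qed.

Lemma matching_within C m : (2 * m <= #|C|)%N ->
  exists2 P : Matching n, is_matching P && (#|P| == m) & {in P, forall e, e \subset C}.
Proof.
elim: m C => [|m IHm] C leCm.
  exists set0 => [|e]; rewrite ?cards0 ?andbT ?inE //.
  by apply/is_matchingP; split => e; rewrite inE.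
have [x Cx] : exists x, x \in C by apply/card_gt0P; lia.
have [y Cy] : exists y, y \in C :\ x by apply/card_gt0P; rewrite (cardsD1 x) Cx in leCm; lia.
have x_neq_y : x != y by move: Cy; rewrite !inE eq_sym => /andP[].
have le_rest : (2 * m <= #|C :\ x :\ y|)%N.
  by rewrite (cardsD1 x) Cx (cardsD1 y (C :\ x)) Cy in leCm; lia.
have [P /andP[/is_matchingP[card2 disj] /eqP cardP] subP] := IHm _ le_rest.
have xy_notin e : e \in P -> [disjoint [set x; y] & e].
  move=> /subP sub; rewrite disjoint_sym disjoints_subset; apply: (subset_trans sub).
  by apply/subsetP => v; rewrite !inE => /and3P[vy vx _]; rewrite negb_or vx vy.
exists ([set x; y] |: P).
  apply/andP; split.
    apply/is_matchingP; split => [e | e e'].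
      by case/setU1P => [->|/card2 //]; rewrite cards2 x_neq_y.
    case/setU1P => [->|Pe] /setU1P[->|Pe']; first by rewrite eqxx.
    - by move=> _; exact: xy_notin.
    - by move=> _; rewrite disjoint_sym; exact: xy_notin.
    - exact: disj.
  rewrite cardsU1 cardP; case: (boolP ([set x; y] \in P)) => // /xy_notin.
  by rewrite -setI_eq0 setIid -cards_eq0 cards2 x_neq_y.
move=> e /setU1P[->|/subP sub]; first by apply/subsetP => v /set2P[]->; [| case/setD1P: Cy].
by apply: (subset_trans sub); apply/subsetP => v /setD1P[_ /setD1P[]].
Qed.

Lemma lclass_disjoint t (S : Labeling n t) (j j' : 'I_t) :
  j != j' -> [disjoint lclass S j & lclass S j'].
Proof.
move=> jj'; rewrite -setI_eq0; apply/eqP/setP => v; rewrite !inE.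
by apply/andP => -[/eqP-> /eqP]; apply/eqP.
Qed.

Lemma no_matchings_nonempty t (S : Labeling n t) :
  (4 * t %| n)%N -> S \in labelings n t -> exists M, M \in no_matchings S.
Proof.
move=> dvd_n; rewrite inE => /forallP class_card; set q := (n %/ (4 * t))%N.
have n_eq : n = (q * (4 * t))%N by rewrite divnK.
have [P PP sub_P] :
    exists2 P : 'I_t -> Matching n, forall j, is_matching (P j) && (#|P j| == q)
      & forall j, {in P j, forall e, e \subset lclass S j}.
  apply: (@fin_all_exists2 _ (fun=> Matching n) (fun _ P => is_matching P && (#|P| == q))
    (fun j P => {in P, forall e, e \subset lclass S j})) => j; apply: matching_within.
  have t_gt0 : (0 < t)%N by apply: leq_ltn_trans (ltn_ord j).
  by rewrite (eqP (class_card j)) n_eq mulnA mulnK //; lia.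
have class_of e j j' : e \in P j -> e \subset lclass S j' -> j = j'.
  move=> Pe sub'; have /andP[/is_matchingP[card2 _] _] := PP j.
  have [v ev] : exists v, v \in e by apply/card_gt0P; rewrite card2.
  by have := subsetP (sub_P j e Pe) v ev; have := subsetP sub' v ev; rewrite !inE => /eqP<- /eqP.
set M := \bigcup_j P j.
have inside j : [set e in M | e \subset lclass S j] = P j.
  apply/setP => e; rewrite inE; apply/andP/idP => [[/bigcupP[j' _ Pe] sub]|Pe].
    by rewrite -(class_of _ _ _ Pe sub).
  by split; [apply/bigcupP; exists j | apply: sub_P].
have card_M : #|M| = \sum_j #|P j|.
  by apply: card_bigcup_uniq => e j j' Pe /(sub_P j'); exact: class_of.
exists M; rewrite !inE -andbA; apply/and3P; split.
- apply/is_matchingP; split => [e /bigcupP[j _ Pe]|e e' /bigcupP[j _ Pe] /bigcupP[j' _ Pe']].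
    by have /andP[/is_matchingP[card2 _] _] := PP j; exact: card2.
  have [eq_jj'|jj'] := eqVneq j j'.
    rewrite -eq_jj' in Pe'; have /andP[/is_matchingP[_ disj] _] := PP j; exact: disj.
  by move=> _; exact: disjointW (sub_P j e Pe) (sub_P j' e' Pe') (lclass_disjoint S jj').
- rewrite card_M (eq_bigr (fun=> q)) => [|j _]; last by case/andP: (PP j) => _ /eqP.
  by rewrite sum_nat_const card_ord n_eq mulnCA mulKn // mulnC.
- by apply/forallP => j; rewrite inside; case/andP: (PP j).
Qed.

End Matchings.

Section OneWayRun.
Variables (n c k : nat) (step : nat -> msg c -> Matching n -> msg c).
Implicit Types (Ms : {ffun 'I_k -> Matching n}).

Lemma eq_input_at Ms Ms' i :
  (forall o : 'I_k, o = i :> nat -> Ms o = Ms' o) -> input_at Ms i = input_at Ms' i.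
Proof. by move=> eqMs; rewrite /input_at; case: insubP => [o _ oi|] //=; rewrite eqMs. Qed.

Lemma eq_ovme_msg Ms Ms' j :
  (forall o : 'I_k, (o < j)%N -> Ms o = Ms' o) -> ovme_msg step Ms j = ovme_msg step Ms' j.
Proof.
elim: j => [//|j IHj] eqMs /=; rewrite IHj => [|o /ltnW]; last exact: eqMs.
by congr step; apply: eq_input_at => o oj; apply: eqMs; rewrite oj.
Qed.

Fixpoint ovme_resume Ms (m : msg c) (j l : nat) : msg c :=
  if l is l'.+1 then step (j + l') (ovme_resume Ms m j l') (input_at Ms (j + l')) else m.

Lemma ovme_msg_resume Ms j l :
  ovme_msg step Ms (j + l) = ovme_resume Ms (ovme_msg step Ms j) j l.
Proof. by elim: l => [|l IHl]; rewrite ?addn0 // addnS /= IHl. Qed.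

Lemma eq_ovme_resume Ms Ms' m j l :
  (forall o : 'I_k, (j <= o)%N -> Ms o = Ms' o) -> ovme_resume Ms m j l = ovme_resume Ms' m j l.
Proof.
move=> eqMs; elim: l => [//|l IHl] /=; rewrite IHl; congr step.
by apply: eq_input_at => o oj; apply: eqMs; rewrite oj leq_addr.
Qed.

Lemma ovme_run_splice (out : msg c -> Matching n -> bool) (j : 'I_k) x m b :
  ovme_run step out (splice j x m b) =
  out (ovme_resume (splice j b m b) (ovme_msg step x j) j (k.-1 - j))
      (input_at (splice j b m b) k.-1).
Proof.
have j_le : (j <= k.-1)%N by have := ltn_ord j; lia.
have same_suffix (o : 'I_k) : (j <= o)%N -> splice j x m b o = splice j b m b o.
  by rewrite !ffunE leqNgt => /negbTE->.
rewrite /ovme_run; set l := (k.-1 - j)%N; have -> : k.-1 = (j + l)%N by rewrite subnKC.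
rewrite ovme_msg_resume (eq_ovme_msg (Ms' := x)) => [|o oj]; last by rewrite ffunE oj.
rewrite (eq_ovme_resume _ _ _ (Ms' := splice j b m b)) //; congr out.
by apply: eq_input_at => o oE; apply: same_suffix; rewrite oE leq_addr.
Qed.

End OneWayRun.

Section Hybrid.
Variables (R : realFieldType) (n k t c : nat) (Rnd : finType) (mu : Rnd -> R).
Variables (step : Rnd -> nat -> msg c -> Matching n -> msg c)
  (out : Rnd -> msg c -> Matching n -> bool).

Local Notation run r := (ovme_run (step r) (out r)).
Local Notation Lab := (labelings n t).

Definition hybrid (S : Labeling n t) (j : nat) : {set {ffun 'I_k -> Matching n}} :=
  prodset (fun i : 'I_k => if (i < j)%N then no_matchings S else matchings n).

Definition hybrid_rate r j (ans : bool) : R :=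
  avg Lab (fun S => avg (hybrid S j) (fun Ms => (run r Ms == ans)%:R)).

Lemma ovme_success_hybrid :
  ovme_success k t mu step out =
  \sum_r mu r * (2^-1 * hybrid_rate r 0 true + 2^-1 * hybrid_rate r k false).
Proof.
have yesE S : yes_inputs n k = hybrid S 0.
  by apply: (@eq_prodset _ _ (fun=> matchings n)) => i; rewrite ltn0.
have noE S : no_inputs k S = hybrid S k.
  by apply: (@eq_prodset _ _ (fun=> no_matchings S)) => i; rewrite ltn_ord.
rewrite /ovme_success; under eq_bigr do rewrite mulrDr ![mu _ * (2^-1 * _)]mulrCA.
rewrite big_split /=; congr (_ + _); rewrite -[in RHS]mulr_sumr; congr (_ * _);
  rewrite /hybrid_rate; under [RHS]eq_bigr do rewrite -avgZ; rewrite -avg_sum;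
  apply: eq_avg => S _; [rewrite (yesE S) | rewrite (noE S)];
  by rewrite avg_sum; apply: eq_bigr => r _; rewrite avgZ.
Qed.

(* Prefixes and suffixes are padded with [set0] outside the coordinates they own. *)
Definition prefixes (j : 'I_k) (S : Labeling n t) :=
  prodset (zones j (no_matchings S) [set set0] [set set0]).
Definition suffixes (j : 'I_k) := prodset (zones j [set set0] [set set0] (matchings n)).

Definition splice_game r (j : 'I_k) b (S : Labeling n t) x : R :=
  2^-1 * avg (matchings n) (fun M => (run r (splice j x M b) == true)%:R) +
  2^-1 * avg (no_matchings S) (fun M => (run r (splice j x M b) == false)%:R).

Definition splice_value r (j : 'I_k) b : R :=
  avg Lab (fun S => avg (prefixes j S) (splice_game r j b S)).

Lemma avg_splice_value r (j : 'I_k) :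
  avg (suffixes j) (splice_value r j) =
  2^-1 * hybrid_rate r j true + 2^-1 * hybrid_rate r j.+1 false.
Proof.
have hybridE S : hybrid S j = prodset (zones j (no_matchings S) (matchings n) (matchings n)).
  by apply: eq_prodset => i; rewrite /zones; case: ltngtP.
have hybridSE S : hybrid S j.+1 = prodset (zones j (no_matchings S) (no_matchings S) (matchings n)).
  by apply: eq_prodset => i; rewrite /zones ltnS leq_eqVlt; case: ltngtP.
rewrite /splice_value exchange_avg /hybrid_rate -!avgZ -avgD; apply: eq_avg => S _.
rewrite exchange_avg hybridE hybridSE (avg_splice set0 j (no_matchings S) (matchings n))
  (avg_splice set0 j (no_matchings S) (no_matchings S)) -!avgZ -avgD.
apply: eq_avg => x _; rewrite /splice_game avgD.
by congr (_ + _); rewrite avgZ; congr (_ * _); apply: exchange_avg.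
Qed.

Lemma splice_game_ge0 r (j : 'I_k) b S x : 0 <= splice_game r j b S x.
Proof.
by rewrite /splice_game addr_ge0 // mulr_ge0 ?invr_ge0 ?ler0n // avg_ge0 // => M; rewrite ler0n.
Qed.

Lemma hlp_of_splice_game r (j : 'I_k) b :
  exists (alice : Labeling n t -> msg c) (bob : msg c -> Matching n -> bool),
    splice_value r j b <= hlp_success R alice bob.
Proof.
pose best S := odflt [ffun=> set0]
  [pick x | avg (prefixes j S) (splice_game r j b S) <= splice_game r j b S x].
pose alice S := ovme_msg (step r) (best S) j.
pose bob m M :=
  out r (ovme_resume (step r) (splice j b M b) m j (k.-1 - j)) (input_at (splice j b M b) k.-1).
exists alice, bob.
suff -> : hlp_success R alice bob = avg Lab (fun S => splice_game r j b S (best S)).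
  by apply: ler_avg => S _; apply: avg_le_pick => x; apply: splice_game_ge0.
symmetry; rewrite /splice_game avgD; congr (_ + _); rewrite avgZ; congr (_ * _);
  by apply: eq_avg => S _; apply: eq_avg => M _; rewrite ovme_run_splice.
Qed.

Hypotheses (dvd_n : (4 * t %| n)%N) (lab_ne : Lab != set0).
Hypotheses (mu_ge0 : forall r, 0 <= mu r) (mu_sum1 : \sum_r mu r = 1).

Lemma hybrid_rate_yes_no (r : Rnd) j : hybrid_rate r j true + hybrid_rate r j false = 1.
Proof.
rewrite -avgD (eq_avg (g := fun=> 1)) ?avg_cst // => S S_lab.
have [M M_no] := no_matchings_nonempty dvd_n S_lab.
have M_yes : M \in matchings n by move: M_no; rewrite inE => /andP[].
have hybrid_ne : hybrid S j != set0.
  apply/set0Pn; exists [ffun=> M]; rewrite inE; apply/forallP => i; rewrite ffunE.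
  by case: ifP.
rewrite -avgD (eq_avg (g := fun=> 1)) ?avg_cst // => Ms _.
by case: (run r Ms); rewrite /= ?addr0 ?add0r.
Qed.

Lemma sum_avg_splice_value :
  \sum_(j < k) \sum_r mu r * avg (suffixes j) (splice_value r j) =
  (k%:R - 1) * 2^-1 + ovme_success k t mu step out.
Proof.
rewrite ovme_success_hybrid exchange_big /=.
have -> : (k%:R - 1) * 2^-1 = \sum_r mu r * ((k%:R - 1) * 2^-1) :> R.
  by rewrite -mulr_suml mu_sum1 mul1r.
rewrite -big_split /=.
apply: eq_bigr => r _; rewrite -mulr_sumr -mulrDr; congr (_ * _).
have yes_no j := hybrid_rate_yes_no r j.
transitivity (\sum_(j < k) (2^-1 + 2^-1 * (hybrid_rate r j.+1 false - hybrid_rate r j false))).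
  by apply: eq_bigr => j _; rewrite avg_splice_value; move: (yes_no j); lra.
rewrite big_split /= -mulr_sumr sumr_const card_ord -mulr_natr.
rewrite -(big_mkord xpredT (fun j => hybrid_rate r j.+1 false - hybrid_rate r j false)).
by rewrite telescope_sumr //; move: (yes_no 0%N); lra.
Qed.

Lemma exists_good_splice eps : (0 < k)%N -> 0 < eps ->
  2^-1 + eps <= ovme_success k t mu step out ->
  exists j r b, 2^-1 + eps / k%:R <= splice_value r j b.
Proof.
move=> k_gt0 eps_gt0 success.
have k_pos : 0 < k%:R :> R by rewrite ltr0n.
have bound_gt0 : 0 < 2^-1 + eps / k%:R by rewrite addr_gt0 ?divr_gt0 ?invr_gt0.
have [j le_j] : exists j : 'I_k,
    2^-1 + eps / k%:R <= \sum_r mu r * avg (suffixes j) (splice_value r j).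
  apply: (@avg_ge_exists _ _ [set: 'I_k]) => //.
  rewrite /avg cardsT card_ord (eq_bigl xpredT) => [|i]; last by rewrite in_setT.
  have -> : 2^-1 + eps / k%:R = k%:R^-1 * (k%:R * 2^-1 + eps).
    by field; rewrite lt0r_neq0.
  by rewrite sum_avg_splice_value ler_wpM2l ?invr_ge0 ?ler0n //; lra.
have [r le_r] := convex_ge_exists mu_ge0 mu_sum1 le_j.
have [b le_b] := avg_ge_exists bound_gt0 le_r.
by exists j, r, b.
Qed.

End Hybrid.

Theorem lemma5p4 (R : realFieldType) (n k t c : nat) (Rnd : finType)
    (mu : Rnd -> R)
    (step : Rnd -> nat -> msg c -> Matching n -> msg c)
    (out : Rnd -> msg c -> Matching n -> bool) (eps : R) :
  (0 < t)%N -> (4 * t %| n)%N -> (0 < k)%N ->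
  (forall r, 0 <= mu r) -> \sum_r mu r = 1 ->
  0 < eps ->
  2^-1 + eps <= ovme_success k t mu step out ->
  exists (alice : Labeling n t -> msg c) (bob : msg c -> Matching n -> bool),
    2^-1 + eps / k%:R <= hlp_success R alice bob.
Proof.
move=> _ dvd_n k_gt0 mu_ge0 mu_sum1 eps_gt0 success.
have lab_ne : labelings n t != set0.
  apply: contraTneq success => lab0; rewrite -ltNge.
  by rewrite /ovme_success lab0 /avg cards0 invr0 !mul0r mulr0 addr0; lra.
have [j [r [b good]]] := exists_good_splice dvd_n lab_ne mu_ge0 mu_sum1 k_gt0 eps_gt0 success.
have [alice [bob le_hlp]] := hlp_of_splice_game R t step out r j b.
by exists alice, bob; apply: le_trans good le_hlp.
Qed.
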